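(* Let $B\subset\mathbb{H}$ have horizontal super-linear growth, i.e. there are constants $c\in(0,\infty)$ and $M<\infty$ such that $h_{x_1}\ge |c x_1|$ for all integers $x_1$ with $|x_1|\ge M$, where $h_{x_1}=\sup\{x_2\ge 0:\ \{x_1\}\times\{1,2,\dots,x_2\}\subset B\}$. Then for every $x\in B$, $$\bar{\mathcal H}_B(x)=0.$$
   Context: $\mathbb{H}=\{(x_1,x_2)\in\mathbb{Z}^2:\ x_2\ge 0\}$ and $L_n=\{(x_1,n):x_1\in\mathbb{Z}\}$. $(S_n)_{n\ge0}$ is a simple random walk on $\mathbb{Z}^2$; $P_z$ denotes its law started at $z$. For $A\subset\mathbb{Z}^2$, $\bar\tau_A=\min\{n\ge0: S_n\in A\}$. For $B\subset\mathbb{H}$, $x\in B$ and $N\ge1$, define $$\bar{\mathcal H}_{B,N}(x)=\sum_{z\in L_N\setminus B}P_z\big(S_{\bar\tau_{B\cup L_0}}=x\big).$$ It is known that the limit $\bar{\mathcal H}_B(x)=\lim_{N\to\infty}\bar{\mathcal H}_{B,N}(x)$ exists and is finite for every $B\subset\mathbb{H}$ and $x\in B$; it is called the stationary harmonic measure of $x$ with respect to $B$. *)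

From Stdlib Require Import Reals ZArith Classical ClassicalEpsilon.
Open Scope R_scope.

Definition pt : Type := (Z * Z)%type.

Definition ind (P : Prop) : R :=
  if excluded_middle_informative P then 1 else 0.

(* hitP n A x z = P_z( tau_A <= n  and  S_{tau_A} = x ),
   where tau_A = min{ k >= 0 : S_k in A } for simple random walk on Z^2. *)
Fixpoint hitP (n : nat) (A : pt -> Prop) (x : pt) (z : pt) : R :=
  match n with
  | O => if excluded_middle_informative (A z) then ind (z = x) else 0
  | S m =>
      if excluded_middle_informative (A z) then ind (z = x)
      else / 4 * ( hitP m A x ((fst z + 1)%Z, snd z)
                 + hitP m A x ((fst z - 1)%Z, snd z)
                 + hitP m A x (fst z, (snd z + 1)%Z)
                 + hitP m A x (fst z, (snd z - 1)%Z) )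
  end.

(* The limit of a real sequence (its value when the sequence converges). *)
Definition Lim (u : nat -> R) : R :=
  epsilon (inhabits 0) (fun l => Un_cv u l).

(* P_z( S_{tau_A} = x ) = lim_n P_z(tau_A <= n, S_{tau_A} = x) *)
Definition hit_prob (A : pt -> Prop) (x z : pt) : R :=
  Lim (fun n => hitP n A x z).

Definition L0 (z : pt) : Prop := snd z = 0%Z.

Definition in_H (z : pt) : Prop := (0 <= snd z)%Z.

(* term of the sum defining bar H_{B,N}(x), for z = (z1, N) in L_N *)
Definition HbarN_term (B : pt -> Prop) (N : Z) (x : pt) (z1 : Z) : R :=
  if excluded_middle_informative (B (z1, N)) then 0
  else hit_prob (fun w => B w \/ L0 w) x (z1, N).

Definition HbarN_partial (B : pt -> Prop) (N : Z) (x : pt) (K : nat) : R :=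
  sum_f_R0 (fun i => HbarN_term B N x (Z.of_nat i - Z.of_nat K)%Z) (2 * K).

(* bar H_{B,N}(x) = sum_{z in L_N \ B} P_z(S_{tau_{B u L_0}} = x)
   (series of nonnegative terms over Z, as limit of symmetric partial sums) *)
Definition HbarN (B : pt -> Prop) (N : Z) (x : pt) : R :=
  Lim (fun K => HbarN_partial B N x K).

(* h_{x1} >= t, where h_{x1} = sup{ x2 >= 0 : {x1} x {1..x2} subset B }
   (sup in [0, +oo]); sup S >= t  iff  every y < t is exceeded by some element of S *)
Definition height_ge (B : pt -> Prop) (x1 : Z) (t : R) : Prop :=
  forall y : R, y < t ->
    exists x2 : Z, (0 <= x2)%Z /\
      (forall k : Z, (1 <= k <= x2)%Z -> B (x1, k)) /\ y < IZR x2.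

Definition superlinear_growth (B : pt -> Prop) : Prop :=
  exists (c : R) (M : Z), 0 < c /\
    forall x1 : Z, (M <= Z.abs x1)%Z -> height_ge B x1 (Rabs (c * IZR x1)).

(* The hitting probabilities are dominated by a barrier built from the Poisson kernel
   Y / (X^2 + Y^2) of the half-plane.  After shifting the height by a large constant D, the
   function a(Y) (Y / (X^2 + Y^2) - d / Y), where a(Y) ~ Y^(-d/4) is a slowly decaying weight,
   is superharmonic for the walk and nonnegative in the cone |X| <= Y / c, and super-linear
   growth of B puts the whole complement of B in that cone.  So P_z(S_tau = x) is at most a
   multiple of a(N + D) / (N + D) on L_N, where only O(N / c) points lie outside B; hence
   H_{B,N}(x) = O(a(N + D)) tends to 0. *)

From Stdlib Require Import Reals ZArith Lra Lia Psatz ClassicalEpsilon.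
From Coquelicot Require Import Complex.
Open Scope R_scope.

Definition poisson_kernel (X Y : R) : R := Y / (X^2 + Y^2).

Lemma Cpoisson_identity (w : C) :
  w <> 0%C -> (w*w*w*w - 1 <> 0)%C -> (w + 1 <> 0)%C -> (w - 1 <> 0)%C ->
  (w + Ci <> 0)%C -> (w - Ci <> 0)%C ->
  (/(w + 1) + /(w - 1) + /(w + Ci) + /(w - Ci) - 4 / w = 4 / (w * (w*w*w*w - 1)))%C.
Proof.
intros.
assert (Hi : (Ci ^ 2 = -1)%C) by (apply injective_projections; simpl; ring).
field_simplify_eq; [rewrite Hi; ring | tauto].
Qed.

(* [poisson_kernel X Y] is the real part of [1 / (Y + i X)], so its discrete Laplacian is the
   real part of the identity above. *)
Lemma poisson_kernel_laplacian_le X Y : 1 < Y ->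
  poisson_kernel (X+1) Y + poisson_kernel (X-1) Y + poisson_kernel X (Y+1)
  + poisson_kernel X (Y-1) - 4 * poisson_kernel X Y <= 4 / (Y * (Y^4 - 1)).
Proof.
intros HY.
set (w := (Y, X) : C).
assert (C_neq0 : forall z : C, 0 < fst z -> z <> 0%C).
{ intros z Hz E; rewrite E in Hz; simpl in Hz; lra. }
assert (Hw : Y <= Cmod w).
{ eapply Rle_trans; [| apply Rmax_Cmod]. simpl. eapply Rle_trans; [| apply Rmax_l].
  rewrite Rabs_right; lra. }
assert (HY4 : 0 < Y^4 - 1) by (assert (1 < Y^2) by nra; nra).
assert (Hw4 : Y^4 - 1 <= Cmod (w*w*w*w - 1)).
{ assert (Y^4 <= Cmod w ^ 4) by (apply pow_incr; lra).
  assert (Cmod (w*w*w*w) = Cmod w ^ 4) by (rewrite !Cmod_mult; ring).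
  pose proof (Cmod_triangle (w*w*w*w - 1) 1) as T.
  replace (w*w*w*w - 1 + 1)%C with (w*w*w*w)%C in T by ring.
  rewrite Cmod_1 in T. lra. }
assert (Hw4' : (w*w*w*w - 1 <> 0)%C) by (intro E; rewrite E, Cmod_0 in Hw4; lra).
assert (E := Cpoisson_identity w ltac:(apply C_neq0; simpl; lra) Hw4'
  ltac:(apply C_neq0; simpl; lra) ltac:(apply C_neq0; simpl; lra)
  ltac:(apply C_neq0; simpl; lra) ltac:(apply C_neq0; simpl; lra)).
apply (f_equal fst) in E.
assert (Re_lhs : fst (/(w+1) + /(w-1) + /(w+Ci) + /(w-Ci) - 4 / w)%C =
   poisson_kernel (X+1) Y + poisson_kernel (X-1) Y + poisson_kernel X (Y+1)
   + poisson_kernel X (Y-1) - 4 * poisson_kernel X Y).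
{ unfold poisson_kernel, w. simpl. clear E Hw4 Hw4'.
  pose proof (pow2_ge_0 X). pose proof (pow2_ge_0 (X-1)). pose proof (pow2_ge_0 (X+1)).
  assert (0 < (Y-1)*(Y-1)) by nra.
  field. repeat split; apply Rgt_not_eq; simpl in *; nra. }
rewrite <- Re_lhs, E.
eapply Rle_trans; [apply Rle_abs|]. eapply Rle_trans; [apply re_le_Cmod|].
rewrite Cmod_div.
2:{ intro Z. apply (f_equal Cmod) in Z. rewrite Cmod_mult, Cmod_0 in Z. nra. }
rewrite Cmod_mult.
replace (Cmod 4) with 4.
2:{ unfold Cmod. simpl. replace (4 * (4 * 1) + 0 * (0 * 1)) with (4*4) by ring.
    rewrite sqrt_square; lra. }
unfold Rdiv. apply Rmult_le_compat_l; [lra|].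
apply Rinv_le_contravar; [nra|]. apply Rmult_le_compat; nra.
Qed.

Definition barrier_profile (d X Y : R) : R := poisson_kernel X Y - d / Y.

Lemma barrier_profile_vertical_diff_le d e X Y : 2 <= Y -> 0 < d -> 0 < e < 1 ->
  barrier_profile d X (Y-1) / (Y - e) - barrier_profile d X (Y+1) / (Y+1)
  <= 4 * Y / ((Y-1)^2 * (Y+1)^2).
Proof.
intros HY Hd He. unfold barrier_profile, poisson_kernel.
assert (Ht : 0 <= X^2) by nra.
set (A := X^2 + (Y-1)^2). set (A' := X^2 + (Y+1)^2).
assert (HA : (Y-1)^2 <= A) by (unfold A; lra).
assert (HA' : (Y+1)^2 <= A') by (unfold A'; lra).
assert (HA0 : 0 < (Y-1)^2) by nra.
assert (lower : (Y-1) / A / (Y-e) <= 1 / A).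
{ assert ((Y-1) / (Y-e) <= 1).
  { apply (Rmult_le_reg_r (Y-e)); [lra|]. unfold Rdiv. rewrite Rmult_assoc, Rinv_l; lra. }
  assert (0 < 1 / A) by (apply Rdiv_lt_0_compat; lra).
  replace ((Y-1) / A / (Y-e)) with (((Y-1) / (Y-e)) * (1 / A)) by (field; lra). nra. }
assert (upper : 1 / A - (Y+1) / A' / (Y+1) <= 4 * Y / ((Y-1)^2 * (Y+1)^2)).
{ replace (1 / A - (Y+1) / A' / (Y+1)) with (4 * Y / (A * A')).
  2:{ unfold A, A'. field. split; nra. }
  unfold Rdiv. apply Rmult_le_compat_l; [lra|].
  apply Rinv_le_contravar; [nra|]. apply Rmult_le_compat; nra. }
assert (correction : - (d / (Y-1)) / (Y-e) + (d / (Y+1)) / (Y+1) <= 0).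
{ replace (- (d / (Y-1)) / (Y-e) + (d / (Y+1)) / (Y+1))
    with (d * (1 / ((Y+1) * (Y+1)) - 1 / ((Y-1) * (Y-e)))) by (field; lra).
  assert (1 / ((Y+1) * (Y+1)) <= 1 / ((Y-1) * (Y-e))).
  { unfold Rdiv; rewrite !Rmult_1_l. apply Rinv_le_contravar; nra. }
  nra. }
replace (((Y-1) / A - d / (Y-1)) / (Y-e) - ((Y+1) / A' - d / (Y+1)) / (Y+1))
  with (((Y-1) / A / (Y-e) - 1 / A) + (1 / A - (Y+1) / A' / (Y+1))
        + (- (d / (Y-1)) / (Y-e) + (d / (Y+1)) / (Y+1))).
2:{ field. unfold A, A'. repeat split; nra. }
lra.
Qed.

Lemma superharmonic_budget d Y : 0 < d -> 2 <= Y -> 8 / d + 2 <= Y^2 ->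
  4 / (Y * (Y^4 - 1)) - d * (2 / (Y * (Y^2 - 1))) + d / 4 * (4 * Y / ((Y-1)^2 * (Y+1)^2)) <= 0.
Proof.
intros Hd HY HY2.
set (u := Y^2).
assert (Hu : 4 <= u) by (unfold u; simpl; nra).
assert (Hdu : 8 <= d * (u - 2)).
{ assert (8 / d <= u - 2) by (unfold u; lra).
  apply (Rmult_le_compat_l d) in H; [|lra].
  replace (d * (8 / d)) with 8 in H by (field; lra). lra. }
replace (4 / (Y * (Y^4 - 1)) - d * (2 / (Y * (u-1))) + d / 4 * (4 * Y / ((Y-1)^2 * (Y+1)^2)))
  with ((4 * (u-1) - d * (u+1) * (u-2)) / (Y * (u-1)^2 * (u+1))).
2:{ unfold u in *. clear - Hu HY. field. repeat split; apply Rgt_not_eq; apply Rlt_gt; nra. }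
assert (0 < (u-1)^2) by (apply pow_lt; lra).
assert (0 < Y * (u-1)^2 * (u+1)) by (apply Rmult_lt_0_compat; [apply Rmult_lt_0_compat|]; lra).
apply Rmult_le_reg_r with (Y * (u-1)^2 * (u+1)); [lra|].
unfold Rdiv. rewrite Rmult_0_l, Rmult_assoc, Rinv_l by lra. clear - Hdu Hu. nra.
Qed.

(* The weights of the vertical neighbours are those produced by the factors
   [1 - e / (k + 1)] of [damping] below, with [e = d / 4]; the [- d / Y] term pays
   for the error of the Poisson kernel and for these weights once [Y^2 >= 8 / d + 2]. *)
Lemma barrier_profile_superharmonic d X Y : 0 < d <= 1/4 -> 2 <= Y -> 8 / d + 2 <= Y^2 ->
  barrier_profile d (X+1) Y + barrier_profile d (X-1) Y
  + (1 - (d/4) / (Y+1)) * barrier_profile d X (Y+1)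
  + (Y / (Y - d/4)) * barrier_profile d X (Y-1) <= 4 * barrier_profile d X Y.
Proof.
intros Hd HY HY2.
set (e := d/4).
assert (He : 0 < e < 1) by (unfold e; lra).
pose proof (poisson_kernel_laplacian_le X Y ltac:(lra)) as Hlap.
pose proof (barrier_profile_vertical_diff_le d e X Y HY ltac:(lra) He) as Hvert.
pose proof (superharmonic_budget d Y ltac:(lra) HY HY2) as Hbudget.
assert (split_terms :
   barrier_profile d (X+1) Y + barrier_profile d (X-1) Y
   + (1 - e / (Y+1)) * barrier_profile d X (Y+1) + (Y / (Y-e)) * barrier_profile d X (Y-1)
   - 4 * barrier_profile d X Y =
   (poisson_kernel (X+1) Y + poisson_kernel (X-1) Y + poisson_kernel X (Y+1)
    + poisson_kernel X (Y-1) - 4 * poisson_kernel X Y)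
   - d * (2 / (Y * (Y^2 - 1)))
   + e * (barrier_profile d X (Y-1) / (Y-e) - barrier_profile d X (Y+1) / (Y+1))).
{ unfold barrier_profile, poisson_kernel. clear Hlap Hvert Hbudget.
  pose proof (pow2_ge_0 X). pose proof (pow2_ge_0 (X-1)). pose proof (pow2_ge_0 (X+1)).
  assert (0 < (Y-1)^2) by (apply pow_lt; lra). assert (0 < (Y+1)^2) by (apply pow_lt; lra).
  assert (0 < Y^2) by (apply pow_lt; lra).
  field. repeat split; apply Rgt_not_eq; apply Rlt_gt; nra. }
assert (e * (barrier_profile d X (Y-1) / (Y-e) - barrier_profile d X (Y+1) / (Y+1))
        <= e * (4 * Y / ((Y-1)^2 * (Y+1)^2))) by (apply Rmult_le_compat_l; lra).
fold e in Hbudget. lra.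
Qed.

Lemma barrier_profile_nonneg d X Y : 0 < Y -> d * X^2 <= (1-d) * Y^2 ->
  0 <= barrier_profile d X Y.
Proof.
intros HY H. unfold barrier_profile, poisson_kernel.
assert (0 <= X^2) by apply pow2_ge_0. assert (0 < Y^2) by (apply pow_lt; lra).
replace (Y / (X^2 + Y^2) - d / Y) with ((Y^2 - d * (X^2 + Y^2)) / (Y * (X^2 + Y^2)))
  by (field; lra).
apply Rmult_le_pos; [lra|]. left. apply Rinv_0_lt_compat. apply Rmult_lt_0_compat; lra.
Qed.

Lemma barrier_profile_pos d X Y : 0 < Y -> d * X^2 < (1-d) * Y^2 ->
  0 < barrier_profile d X Y.
Proof.
intros HY H. unfold barrier_profile, poisson_kernel.
assert (0 <= X^2) by apply pow2_ge_0. assert (0 < Y^2) by (apply pow_lt; lra).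
replace (Y / (X^2 + Y^2) - d / Y) with ((Y^2 - d * (X^2 + Y^2)) / (Y * (X^2 + Y^2)))
  by (field; lra).
apply Rmult_lt_0_compat; [lra|]. apply Rinv_0_lt_compat. apply Rmult_lt_0_compat; lra.
Qed.

Lemma barrier_profile_le d X Y : 0 < d -> 0 < Y -> barrier_profile d X Y <= 1 / Y.
Proof.
intros Hd HY. unfold barrier_profile, poisson_kernel.
assert (0 <= X^2) by apply pow2_ge_0. assert (0 < Y^2) by (apply pow_lt; lra).
assert (Y / (X^2 + Y^2) <= Y / Y^2).
{ unfold Rdiv. apply Rmult_le_compat_l; [lra|]. apply Rinv_le_contravar; lra. }
replace (Y / Y^2) with (1 / Y) in H1 by (field; lra).
assert (0 < d / Y) by (apply Rdiv_lt_0_compat; lra). lra.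
Qed.

(* [damping e n] behaves like [n ^ (- e)]. *)
Fixpoint damping (e : R) (n : nat) : R :=
  match n with O => 1 | S m => damping e m * (1 - e / (INR m + 1)) end.

Lemma damping_S e n : damping e (S n) = damping e n * (1 - e / (INR n + 1)).
Proof. reflexivity. Qed.

Lemma damping_pos e n : 0 < e < 1 -> 0 < damping e n.
Proof.
intros He; induction n as [|n IHn]; simpl; [lra|].
apply Rmult_lt_0_compat; [lra|].
pose proof (pos_INR n).
assert (e / (INR n + 1) < 1).
{ apply (Rmult_lt_reg_r (INR n + 1)); [lra|]. unfold Rdiv. rewrite Rmult_assoc, Rinv_l; lra. }
lra.
Qed.

Lemma ln_le_compat x y : 0 < x -> x <= y -> ln x <= ln y.
Proof. intros Hx [Hxy | <-]; [left; apply ln_increasing | right]; auto. Qed.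

Lemma ln_succ_sub_le y : 0 < y -> ln (y + 1) - ln y <= 1 / y.
Proof.
intros Hy.
assert (0 < 1 / y) by (apply Rdiv_lt_0_compat; lra).
replace (y + 1) with (y * (1 + 1 / y)) by (field; lra).
rewrite ln_mult by lra.
assert (ln (1 + 1 / y) <= 1 / y).
{ rewrite <- (ln_exp (1 / y)) at 2. apply ln_le_compat; [lra | apply exp_ineq1_le]. }
lra.
Qed.

Lemma damping_mul_ln_le e n : 0 < e < 1 -> damping e n * (1 + e * ln (INR n + 1)) <= 1.
Proof.
intros He; induction n as [|n IHn].
- simpl. rewrite Rplus_0_l, ln_1. lra.
- cbn [damping]. rewrite S_INR.
  set (y := INR n + 1). assert (Hy : 1 <= y) by (unfold y; pose proof (pos_INR n); lra).
  pose proof (ln_succ_sub_le y ltac:(lra)) as Hstep.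
  assert (Hln : 0 <= ln y) by (rewrite <- ln_1; apply ln_le_compat; lra).
  pose proof (damping_pos e n He) as Ha.
  set (t := e / y).
  assert (Ht : 0 < t < 1).
  { unfold t; split; [apply Rdiv_lt_0_compat; lra|].
    apply (Rmult_lt_reg_r y); [lra|]. unfold Rdiv. rewrite Rmult_assoc, Rinv_l; lra. }
  assert (e * ln (y + 1) <= e * ln y + t).
  { unfold t. replace (e / y) with (e * (1 / y)) by (field; lra). nra. }
  assert ((1 - t) * (1 + e * ln y + t) <= 1 + e * ln y).
  { assert (0 <= t * (e * ln y + t)) by (apply Rmult_le_pos; nra). nra. }
  apply Rle_trans with (damping e n * ((1 - t) * (1 + e * ln y + t))).
  + rewrite Rmult_assoc. apply Rmult_le_compat_l; [lra|]. nra.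
  + apply Rle_trans with (damping e n * (1 + e * ln y)); [|exact IHn].
    apply Rmult_le_compat_l; lra.
Qed.

Lemma damping_cvg0 e : 0 < e < 1 -> Un_cv (damping e) 0.
Proof.
intros He eta Heta.
destruct (INR_unbounded (exp (1 / (e * eta)))) as [n0 Hn0].
exists n0. intros n Hn. unfold Rdist. rewrite Rminus_0_r.
pose proof (damping_mul_ln_le e n He). pose proof (damping_pos e n He).
rewrite Rabs_right by lra.
assert (INR n0 <= INR n) by (apply le_INR; lia).
assert (Hln : 1 / (e * eta) < ln (INR n + 1)).
{ rewrite <- (ln_exp (1 / (e * eta))). apply ln_increasing; [apply exp_pos | lra]. }
assert (0 < e * eta) by nra.
assert (1 < e * eta * ln (INR n + 1)).
{ apply (Rmult_lt_compat_l (e * eta)) in Hln; [|lra].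
  replace (e * eta * (1 / (e * eta))) with 1 in Hln by (field; lra). lra. }
nra.
Qed.

Lemma Lim_growing_bounded (u : nat -> R) (b : R) :
  Un_growing u -> (forall n, 0 <= u n <= b) -> 0 <= Lim u <= b.
Proof.
intros Hg Hb.
destruct (growing_cv u Hg) as [l Hl].
{ exists b. intros y [n ->]. apply Hb. }
assert (E : Lim u = l).
{ apply (UL_sequence u); [|exact Hl].
  apply (epsilon_spec (inhabits 0) (fun l => Un_cv u l)). exists l; exact Hl. }
rewrite E. split.
- apply Rle_trans with (u 0%nat); [apply Hb | apply (growing_ineq u l Hg Hl)].
- apply (Rle_cv_lim (Un := u) (Vn := fun _ => b)); [intro n; apply Hb | exact Hl |].
  intros eps He. exists 0%nat. intros. unfold Rdist. rewrite Rminus_diag, Rabs_R0. exact He.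
Qed.

Definition walk_avg (F : pt -> R) (z : pt) : R :=
  / 4 * (F ((fst z + 1)%Z, snd z) + F ((fst z - 1)%Z, snd z)
         + F (fst z, (snd z + 1)%Z) + F (fst z, (snd z - 1)%Z)).

Lemma walk_avg_le F G z :
  (forall w, (Z.abs (fst w - fst z) + Z.abs (snd w - snd z) = 1)%Z -> F w <= G w) ->
  walk_avg F z <= walk_avg G z.
Proof.
intros H. unfold walk_avg.
pose proof (H ((fst z + 1)%Z, snd z) ltac:(simpl; lia)).
pose proof (H ((fst z - 1)%Z, snd z) ltac:(simpl; lia)).
pose proof (H (fst z, (snd z + 1)%Z) ltac:(simpl; lia)).
pose proof (H (fst z, (snd z - 1)%Z) ltac:(simpl; lia)).
lra.
Qed.

Lemma hitP_S n A x z :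
  hitP (S n) A x z = if excluded_middle_informative (A z) then ind (z = x)
                     else walk_avg (hitP n A x) z.
Proof. reflexivity. Qed.

Lemma ind_nonneg P : 0 <= ind P.
Proof. unfold ind. destruct (excluded_middle_informative P); lra. Qed.

Lemma hitP_nonneg n A x z : 0 <= hitP n A x z.
Proof.
revert z; induction n as [|n IHn]; intro z.
- simpl. destruct (excluded_middle_informative (A z)); [apply ind_nonneg | lra].
- rewrite hitP_S. destruct (excluded_middle_informative (A z)); [apply ind_nonneg|].
  apply Rle_trans with (walk_avg (fun _ => 0) z).
  + unfold walk_avg; lra.
  + apply walk_avg_le; auto.
Qed.

Lemma hitP_growing A x z : Un_growing (fun n => hitP n A x z).
Proof.
intro n; revert z; induction n as [|n IHn]; intro z.
- rewrite hitP_S. simpl. destruct (excluded_middle_informative (A z)); [lra|].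
  apply Rle_trans with (walk_avg (fun _ => 0) z).
  + unfold walk_avg; lra.
  + apply walk_avg_le; intros; apply (hitP_nonneg 0).
- rewrite (hitP_S n), (hitP_S (S n)).
  destruct (excluded_middle_informative (A z)); [lra|].
  apply walk_avg_le; auto.
Qed.

(* Elementary optional stopping. *)
Lemma hitP_le_superharmonic (A : pt -> Prop) (x : pt) (F : pt -> R) :
  (forall z, L0 z -> A z) ->
  (forall z, in_H z -> 0 <= F z) -> 1 <= F x ->
  (forall z, in_H z -> ~ A z -> walk_avg F z <= F z) ->
  forall n z, in_H z -> hitP n A x z <= F z.
Proof.
intros HL0 F_nonneg F_x F_super.
assert (on_A : forall z, in_H z -> ind (z = x) <= F z).
{ intros z Hz. unfold ind. destruct (excluded_middle_informative (z = x)) as [->|]; auto. }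
induction n as [|n IHn]; intros z Hz.
- simpl. destruct (excluded_middle_informative (A z)); auto.
- rewrite hitP_S. destruct (excluded_middle_informative (A z)) as [Ha|Ha]; auto.
  apply Rle_trans with (walk_avg F z); [|auto].
  assert (Hz1 : (1 <= snd z)%Z).
  { assert (snd z <> 0%Z) by (intro E; apply Ha, HL0, E). unfold in_H in Hz. lia. }
  apply walk_avg_le. intros w Hw. apply IHn. unfold in_H. lia.
Qed.

Lemma hit_prob_le (A : pt -> Prop) (x z : pt) (b : R) :
  (forall n, hitP n A x z <= b) -> 0 <= hit_prob A x z <= b.
Proof.
intros H. apply Lim_growing_bounded; [apply hitP_growing|].
intro n. split; [apply hitP_nonneg | apply H].
Qed.

Definition sym_sum (t : Z -> R) (K : nat) : R :=
  sum_f_R0 (fun i => t (Z.of_nat i - Z.of_nat K)%Z) (2 * K).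

Lemma sym_sum_S t K :
  sym_sum t (S K) = t (- Z.of_nat (S K))%Z + sym_sum t K + t (Z.of_nat (S K)).
Proof.
unfold sym_sum. replace (2 * S K)%nat with (S (S (2 * K))) by lia.
rewrite tech5, decomp_sum by lia. simpl Init.Nat.pred.
replace (Z.of_nat 0 - Z.of_nat (S K))%Z with (- Z.of_nat (S K))%Z by lia.
replace (Z.of_nat (S (S (2 * K))) - Z.of_nat (S K))%Z with (Z.of_nat (S K)) by lia.
replace (K + (K + 0))%nat with (2 * K)%nat by lia.
rewrite (sum_eq (fun i => t (Z.of_nat (S i) - Z.of_nat (S K))%Z)
                (fun i => t (Z.of_nat i - Z.of_nat K)%Z)); [reflexivity|].
intros i _. f_equal. lia.
Qed.

Lemma sym_sum_le t C R0 : (forall z, 0 <= t z <= C) ->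
  (forall z, (Z.of_nat R0 < Z.abs z)%Z -> t z = 0) ->
  forall K, 0 <= sym_sum t K <= (2 * INR R0 + 1) * C.
Proof.
intros Hb Hz K.
enough (0 <= sym_sum t K <= (2 * INR (Nat.min K R0) + 1) * C).
{ assert (INR (Nat.min K R0) <= INR R0) by (apply le_INR; lia).
  pose proof (Hb 0%Z). nra. }
induction K as [|K IHK].
- unfold sym_sum. simpl. pose proof (Hb 0%Z). lra.
- rewrite sym_sum_S. pose proof (Hb (- Z.of_nat (S K))%Z). pose proof (Hb (Z.of_nat (S K))).
  destruct (le_lt_dec (S K) R0) as [h|h].
  + replace (Nat.min (S K) R0) with (S K) by lia.
    replace (Nat.min K R0) with K in IHK by lia. rewrite S_INR. lra.
  + rewrite (Hz (- Z.of_nat (S K))%Z), (Hz (Z.of_nat (S K))) by lia.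
    replace (Nat.min (S K) R0) with R0 by lia.
    replace (Nat.min K R0) with R0 in IHK by lia. lra.
Qed.

Lemma sym_sum_growing t : (forall z, 0 <= t z) -> Un_growing (sym_sum t).
Proof.
intros H K. rewrite sym_sum_S.
pose proof (H (- Z.of_nat (S K))%Z). pose proof (H (Z.of_nat (S K))). lra.
Qed.

Lemma HbarN_le B N x C R0 :
  (forall z1, 0 <= HbarN_term B N x z1 <= C) ->
  (forall z1, (Z.of_nat R0 < Z.abs z1)%Z -> HbarN_term B N x z1 = 0) ->
  0 <= HbarN B N x <= (2 * INR R0 + 1) * C.
Proof.
intros Hb Hz. apply Lim_growing_bounded.
- apply (sym_sum_growing (HbarN_term B N x)). intro z; apply Hb.
- apply (sym_sum_le (HbarN_term B N x) C R0 Hb Hz).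
Qed.

Section Barrier.

Variables (B : pt -> Prop) (c : R) (M : Z).
Hypothesis c_pos : 0 < c.
Hypothesis B_tall : forall x1, (M <= Z.abs x1)%Z -> height_ge B x1 (Rabs (c * IZR x1)).

Lemma notin_B_cone z : ~ B z -> (1 <= snd z)%Z ->
  (Z.abs (fst z) < M)%Z \/ c * Rabs (IZR (fst z)) <= IZR (snd z).
Proof.
destruct z as [z1 z2]; simpl. intros HB H1.
destruct (Z_lt_le_dec (Z.abs z1) M) as [h|h]; [left; exact h | right].
destruct (Rle_dec (c * Rabs (IZR z1)) (IZR z2)) as [r|r]; [exact r | exfalso].
destruct (B_tall z1 h (IZR z2)) as [x2 [Hx2 [Hcol Hlt]]].
{ rewrite Rabs_mult, (Rabs_right c) by lra. lra. }
apply lt_IZR in Hlt. apply HB, Hcol. lia.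
Qed.

Variables (d : R) (D : nat).
Hypothesis d_pos : 0 < d.
Hypothesis d_cone : d * (8 * (1 + / c)^2) <= 1.
Hypothesis D_large : 8 / d + 2 <= INR D.
Hypothesis D_cone : c * Rabs (IZR M) <= INR D.

Lemma d_le : d <= 1/8.
Proof. assert (0 < / c) by (apply Rinv_0_lt_compat; lra). nra. Qed.

Lemma D_ge2 : 2 <= INR D.
Proof. assert (0 < 8 / d) by (apply Rdiv_lt_0_compat; lra). lra. Qed.

Definition shifted_height (z : pt) : R := IZR (snd z) + INR D.
Definition height_index (z : pt) : nat := Z.to_nat (snd z + Z.of_nat D).

Lemma height_index_INR z : in_H z -> INR (height_index z) = shifted_height z.
Proof.
unfold in_H, height_index, shifted_height. intro H.
rewrite INR_IZR_INZ, Z2Nat.id, plus_IZR, <- INR_IZR_INZ by lia. reflexivity.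
Qed.

Lemma notin_B_shifted_cone z : ~ B z -> (1 <= snd z)%Z ->
  Rabs (IZR (fst z)) <= / c * shifted_height z.
Proof.
intros HB H1. unfold shifted_height.
assert (Hc : 0 < / c) by (apply Rinv_0_lt_compat; lra).
assert (0 <= IZR (snd z)) by (apply IZR_le; lia).
pose proof (pos_INR D).
destruct (notin_B_cone z HB H1) as [h|h].
- assert (Rabs (IZR (fst z)) < Rabs (IZR M)).
  { rewrite <- !abs_IZR. apply IZR_lt. lia. }
  assert (Rabs (IZR M) <= / c * INR D).
  { apply (Rmult_le_reg_l c); [lra|]. rewrite <- Rmult_assoc, Rinv_r, Rmult_1_l; lra. }
  nra.
- assert (Rabs (IZR (fst z)) <= / c * IZR (snd z)).
  { apply (Rmult_le_reg_l c); [lra|]. rewrite <- Rmult_assoc, Rinv_r, Rmult_1_l; lra. }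
  nra.
Qed.

Lemma barrier_profile_nonneg_in_cone X' Y' Y : 2 <= Y ->
  Rabs X' <= / c * Y + 1 -> Y - 1 <= Y' -> 0 <= barrier_profile d X' Y'.
Proof.
intros HY HX HY'.
assert (Hc : 0 < / c) by (apply Rinv_0_lt_compat; lra).
assert (Hwide : Rabs X' <= (1 + / c) * (2 * Y')) by nra.
assert (X'^2 <= ((1 + / c) * (2 * Y'))^2).
{ rewrite <- (pow2_abs X'). apply pow_incr. split; [apply Rabs_pos | exact Hwide]. }
assert (d * X'^2 <= d * (8 * (1 + / c)^2) * (Y'^2 / 2)).
{ replace (d * (8 * (1 + / c)^2) * (Y'^2 / 2)) with (d * ((1 + / c) * (2 * Y'))^2) by (field; lra).
  apply Rmult_le_compat_l; lra. }
pose proof d_le. pose proof (pow2_ge_0 Y').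
apply barrier_profile_nonneg; [lra | nra].
Qed.

Definition barrier (K : R) (z : pt) : R :=
  K * Rmax 0 (damping (d/4) (height_index z)
              * barrier_profile d (IZR (fst z)) (shifted_height z)).

Lemma barrier_nonneg K z : 0 <= K -> 0 <= barrier K z.
Proof. intro HK. apply Rmult_le_pos; [exact HK | apply Rmax_l]. Qed.

Lemma barrier_at K z n Y : height_index z = n -> shifted_height z = Y ->
  0 <= barrier_profile d (IZR (fst z)) Y ->
  barrier K z = K * (damping (d/4) n * barrier_profile d (IZR (fst z)) Y).
Proof.
intros <- <- Hg. unfold barrier. rewrite Rmax_right; [reflexivity|].
pose proof d_le. apply Rmult_le_pos; [left; apply damping_pos; lra | exact Hg].
Qed.

Lemma barrier_le K z : 0 <= K -> in_H z ->
  barrier K z <= K * damping (d/4) (height_index z) / shifted_height z.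
Proof.
intros HK Hz.
assert (HY : 1 <= shifted_height z).
{ unfold shifted_height, in_H in *. apply IZR_le in Hz. pose proof D_ge2. lra. }
pose proof (damping_pos (d/4) (height_index z) ltac:(pose proof d_le; lra)) as Ha.
pose proof (barrier_profile_le d (IZR (fst z)) (shifted_height z) d_pos ltac:(lra)).
unfold barrier, Rdiv. rewrite Rmult_assoc. apply Rmult_le_compat_l; [exact HK|].
apply Rmax_lub; [apply Rmult_le_pos; [lra | left; apply Rinv_0_lt_compat; lra]|].
apply Rmult_le_compat_l; lra.
Qed.

Lemma walk_avg_barrier K z1 z2 m : (1 <= z2)%Z -> height_index (z1, z2) = S m ->
  (forall w, (Z.abs (fst w - z1) + Z.abs (snd w - z2) <= 1)%Z ->
     0 <= barrier_profile d (IZR (fst w)) (shifted_height w)) ->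
  let X := IZR z1 in let Y := shifted_height (z1, z2) in let e := d / 4 in
  walk_avg (barrier K) (z1, z2)
  = K * damping e (S m) / 4
    * (barrier_profile d (X + 1) Y + barrier_profile d (X - 1) Y
       + (1 - e / (Y + 1)) * barrier_profile d X (Y + 1)
       + (Y / (Y - e)) * barrier_profile d X (Y - 1)).
Proof.
intros Hz2 Em Hnb X Y e.
assert (He : 0 < e < 1) by (pose proof d_le; unfold e; lra).
assert (HY : INR m + 1 = Y).
{ rewrite <- S_INR, <- Em. apply height_index_INR. unfold in_H; simpl; lia. }
assert (Hr := barrier_at K ((z1 + 1)%Z, z2) (S m) Y Em eq_refl
  (Hnb ((z1 + 1)%Z, z2) ltac:(simpl; lia))).
assert (Hl := barrier_at K ((z1 - 1)%Z, z2) (S m) Y Em eq_refl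
  (Hnb ((z1 - 1)%Z, z2) ltac:(simpl; lia))).
assert (hu : shifted_height (z1, (z2 + 1)%Z) = Y + 1)
  by (unfold Y, shifted_height; simpl; rewrite plus_IZR; ring).
assert (hd : shifted_height (z1, (z2 - 1)%Z) = Y - 1)
  by (unfold Y, shifted_height; simpl; rewrite minus_IZR; ring).
assert (Hu := barrier_at K (z1, (z2 + 1)%Z) (S (S m)) (Y + 1)
  ltac:(unfold height_index in *; simpl in *; lia) hu
  ltac:(rewrite <- hu; apply Hnb; simpl; lia)).
assert (Hd := barrier_at K (z1, (z2 - 1)%Z) m (Y - 1)
  ltac:(unfold height_index in *; simpl in *; lia) hd
  ltac:(rewrite <- hd; apply Hnb; simpl; lia)).
unfold walk_avg; simpl fst; simpl snd.
rewrite Hr, Hl, Hu, Hd; simpl fst; rewrite plus_IZR, minus_IZR; fold X e.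
rewrite (damping_S e (S m)), (damping_S e m), S_INR, HY.
pose proof (pos_INR m). field; repeat split; lra.
Qed.

Lemma barrier_superharmonic K z : 0 <= K -> in_H z -> ~ (B z \/ L0 z) ->
  walk_avg (barrier K) z <= barrier K z.
Proof.
intros HK Hz Hout. destruct z as [z1 z2].
assert (Hz2 : (1 <= z2)%Z) by (unfold in_H, L0 in *; simpl in *; lia).
set (X := IZR z1). set (Y := shifted_height (z1, z2)).
assert (HY : 2 <= Y).
{ unfold Y, shifted_height; simpl. apply IZR_le in Hz2. pose proof D_ge2. lra. }
assert (HY2 : 8 / d + 2 <= Y^2).
{ assert (8 / d + 2 <= Y) by (unfold Y, shifted_height; simpl; apply IZR_le in Hz2; lra). nra. }
assert (HX : Rabs X <= / c * Y) by (apply (notin_B_shifted_cone (z1, z2)); auto).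
assert (Hnb : forall w, (Z.abs (fst w - z1) + Z.abs (snd w - z2) <= 1)%Z ->
          0 <= barrier_profile d (IZR (fst w)) (shifted_height w)).
{ intros [w1 w2] Hw; simpl in Hw |- *.
  apply (barrier_profile_nonneg_in_cone _ _ Y HY).
  - assert (Rabs (IZR w1 - X) <= 1).
    { unfold X. rewrite <- minus_IZR, <- abs_IZR. apply IZR_le. lia. }
    pose proof (Rabs_triang (IZR w1 - X) X). replace (IZR w1 - X + X) with (IZR w1) in * by ring.
    lra.
  - unfold Y, shifted_height; simpl. assert (z2 - 1 <= w2)%Z by lia.
    apply IZR_le in H. rewrite minus_IZR in H. lra. }
assert (Hidx : INR (height_index (z1, z2)) = Y) by (apply height_index_INR; exact Hz).
destruct (height_index (z1, z2)) as [|m] eqn:Em; [simpl in Hidx; lra|].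
rewrite (walk_avg_barrier K z1 z2 m Hz2 Em Hnb); fold X Y.
rewrite (barrier_at K (z1, z2) (S m) Y Em eq_refl (Hnb (z1, z2) ltac:(simpl; lia))).
simpl fst; fold X.
pose proof (damping_pos (d/4) (S m) ltac:(pose proof d_le; lra)).
pose proof (barrier_profile_superharmonic d X Y ltac:(pose proof d_le; lra) HY HY2).
replace (K * (damping (d/4) (S m) * barrier_profile d X Y))
  with (K * damping (d/4) (S m) / 4 * (4 * barrier_profile d X Y)) by field.
apply Rmult_le_compat_l; [apply Rmult_le_pos; [apply Rmult_le_pos|]; lra | assumption].
Qed.

Definition barrier_scale (x : pt) : R :=
  / (damping (d/4) (height_index x) * barrier_profile d (IZR (fst x)) (shifted_height x)).

Lemma barrier_profile_pos_near x : in_H x -> Rabs (IZR (fst x)) < INR D ->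
  0 < barrier_profile d (IZR (fst x)) (shifted_height x).
Proof.
intros Hx Hx1. pose proof d_le.
assert (INR D <= shifted_height x).
{ unfold shifted_height, in_H in *. apply IZR_le in Hx. lra. }
pose proof D_ge2. pose proof (Rabs_pos (IZR (fst x))).
apply barrier_profile_pos; [lra|].
rewrite <- (pow2_abs (IZR (fst x))). nra.
Qed.

Lemma barrier_scale_pos x : in_H x -> Rabs (IZR (fst x)) < INR D -> 0 < barrier_scale x.
Proof.
intros Hx Hx1. pose proof d_le. pose proof (barrier_profile_pos_near x Hx Hx1).
apply Rinv_0_lt_compat, Rmult_lt_0_compat; [apply damping_pos; lra | lra].
Qed.

Lemma hitP_le_barrier x : in_H x -> Rabs (IZR (fst x)) < INR D ->
  forall n z, in_H z -> hitP n (fun w => B w \/ L0 w) x z <= barrier (barrier_scale x) z.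
Proof.
intros Hx Hx1.
pose proof (barrier_scale_pos x Hx Hx1). pose proof (barrier_profile_pos_near x Hx Hx1).
pose proof (damping_pos (d/4) (height_index x) ltac:(pose proof d_le; lra)).
apply hitP_le_superharmonic.
- intros z Hz. right. exact Hz.
- intros z _. apply barrier_nonneg. lra.
- rewrite (barrier_at _ x _ _ eq_refl eq_refl) by lra. unfold barrier_scale.
  rewrite Rinv_l; [lra | apply Rgt_not_eq, Rmult_lt_0_compat; lra].
- intros z Hz Hout. apply barrier_superharmonic; [lra | exact Hz | exact Hout].
Qed.

Lemma HbarN_le_damping x K : 0 <= K ->
  (forall n z, in_H z -> hitP n (fun w => B w \/ L0 w) x z <= barrier K z) ->
  forall N, (1 <= N)%Z ->
  0 <= HbarN B N x <= (2 / c + 3) * K * damping (d/4) (height_index (0%Z, N)).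
Proof.
intros HK Hhit N HN.
set (Y := shifted_height (0%Z, N)). set (a := damping (d/4) (height_index (0%Z, N))).
assert (HY : 1 <= Y) by (unfold Y, shifted_height; simpl; apply IZR_le in HN; pose proof D_ge2; lra).
assert (Ha : 0 < a) by (apply damping_pos; pose proof d_le; lra).
set (R0 := Z.to_nat (up (Y / c))).
assert (HYc : 0 < Y / c) by (apply Rdiv_lt_0_compat; lra).
destruct (archimed (Y / c)) as [Hup1 Hup2].
assert (HR0 : INR R0 = IZR (up (Y / c))).
{ unfold R0. rewrite INR_IZR_INZ, Z2Nat.id; [reflexivity|]. apply le_IZR. lra. }
assert (Hbound : 0 <= HbarN B N x <= (2 * INR R0 + 1) * (K * a / Y)).
{ apply HbarN_le.
  - intro z1. unfold HbarN_term.
    destruct (excluded_middle_informative (B (z1, N))) as [_|HnB].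
    + split; [lra|]. apply Rmult_le_pos; [nra | left; apply Rinv_0_lt_compat; lra].
    + assert (Hz : in_H (z1, N)) by (unfold in_H; simpl; lia).
      apply hit_prob_le. intro n. eapply Rle_trans; [apply (Hhit n _ Hz)|].
      apply (barrier_le K (z1, N) HK Hz).
  - intros z1 Hz1. unfold HbarN_term.
    destruct (excluded_middle_informative (B (z1, N))) as [|HnB]; [reflexivity | exfalso].
    pose proof (notin_B_shifted_cone (z1, N) HnB HN) as Hcone. simpl fst in Hcone.
    assert (Rabs (IZR z1) <= Y / c) by (unfold Rdiv; rewrite Rmult_comm; exact Hcone).
    apply IZR_lt in Hz1. rewrite <- INR_IZR_INZ, abs_IZR in Hz1. lra. }
split; [apply Hbound|]. eapply Rle_trans; [apply Hbound|].
assert (INR R0 <= Y / c + 1) by lra.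
replace ((2 * INR R0 + 1) * (K * a / Y)) with ((2 * INR R0 + 1) / Y * (K * a)) by (field; lra).
rewrite Rmult_assoc. apply Rmult_le_compat_r; [nra|].
apply (Rmult_le_reg_r Y); [lra|]. unfold Rdiv. rewrite Rmult_assoc, Rinv_l by lra.
assert (0 < / c) by (apply Rinv_0_lt_compat; lra).
unfold Rdiv in *. nra.
Qed.

End Barrier.

Lemma Un_cv0_squeeze (u v : nat -> R) (C : R) :
  (forall n, 0 <= u n <= C * v n) -> Un_cv v 0 -> Un_cv u 0.
Proof.
intros Hle Hv eps Heps.
destruct (Hv (eps / (Rabs C + 1))) as [n0 Hn0].
{ apply Rdiv_lt_0_compat; [lra | pose proof (Rabs_pos C); lra]. }
exists n0. intros n Hn. specialize (Hn0 n Hn). specialize (Hle n).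
unfold Rdist in *. rewrite Rminus_0_r in *. rewrite Rabs_right by lra.
pose proof (Rabs_pos C).
assert (Rabs (v n) * (Rabs C + 1) < eps).
{ apply (Rmult_lt_compat_r (Rabs C + 1)) in Hn0; [|lra].
  replace (eps / (Rabs C + 1) * (Rabs C + 1)) with eps in Hn0 by (field; lra). exact Hn0. }
assert (C * v n <= Rabs C * Rabs (v n)) by (rewrite <- Rabs_mult; apply Rle_abs).
pose proof (Rabs_pos (v n)). nra.
Qed.

Theorem theorem1 (B : pt -> Prop) (HBH : forall z, B z -> in_H z)
  (Hgrowth : superlinear_growth B) (x : pt) (Hx : B x) :
  Un_cv (fun n : nat => HbarN B (Z.of_nat n + 1)%Z x) 0.
Proof.
destruct Hgrowth as [c [M [Hc B_tall]]].
set (d := / (8 * (1 + / c)^2)).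
assert (Hc8 : 0 < 8 * (1 + / c)^2)
  by (assert (0 < / c) by (apply Rinv_0_lt_compat; lra); nra).
assert (Hd : 0 < d) by (apply Rinv_0_lt_compat; exact Hc8).
assert (d_cone : d * (8 * (1 + / c)^2) <= 1) by (unfold d; rewrite Rinv_l; lra).
assert (Hd8 : d <= 1/8) by (assert (0 < / c) by (apply Rinv_0_lt_compat; lra); nra).
destruct (INR_unbounded (8 / d + 2 + c * Rabs (IZR M) + Rabs (IZR (fst x)))) as [D HD].
assert (0 < 8 / d) by (apply Rdiv_lt_0_compat; lra).
pose proof (Rabs_pos (IZR M)). pose proof (Rabs_pos (IZR (fst x))).
assert (0 <= c * Rabs (IZR M)) by (apply Rmult_le_pos; lra).
pose proof (barrier_scale_pos c Hc d D Hd d_cone ltac:(lra) x (HBH x Hx) ltac:(lra)) as HK.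
pose proof (hitP_le_barrier B c M Hc B_tall d D Hd d_cone ltac:(lra) ltac:(lra) x
  (HBH x Hx) ltac:(lra)) as Hhit.
set (K := barrier_scale d D x) in *.
apply (Un_cv0_squeeze _ (fun n => damping (d/4) (n + S D)) ((2 / c + 3) * K)).
- intro n. replace (n + S D)%nat with (height_index D (0%Z, (Z.of_nat n + 1)%Z))
    by (unfold height_index; simpl; lia).
  apply (HbarN_le_damping B c M Hc B_tall d D Hd d_cone ltac:(lra) ltac:(lra) x K);
    [lra | exact Hhit | lia].
- apply CV_shift', damping_cvg0. lra.
Qed.
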